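(* Let $n\in\mathbb{N}$, and let $\mathcal{H}\in C^1(\mathbb{R}^{n},\mathbb{R})$, $E\in C(\mathbb{R}^{n},\mathbb{R}^{n,n})$ and $z\in C(\mathbb{R}^{n},\mathbb{R}^{n})$ satisfy $E(x)^\top z(x)=\nabla\mathcal{H}(x)$ for all $x\in\mathbb{R}^n$. Assume further that $E(x)$ is symmetric and positive definite for every $x\in\mathbb{R}^n$. Define $\overline{E}\colon\mathbb{R}^n\times\mathbb{R}^n\to\mathbb{R}^{n,n}$ and $\overline{z}\colon\mathbb{R}^n\times\mathbb{R}^n\to\mathbb{R}^n$ by $$\overline{E}(x,\hat x):=E\!\left(\tfrac{\hat x+x}{2}\right),$$ $$\overline{z}(x,\hat x):=\begin{cases} z\!\left(\tfrac{\hat x+x}{2}\right)+\dfrac{\mathcal{H}(\hat x)-\mathcal{H}(x)-z\!\left(\tfrac{\hat x+x}{2}\right)^\top\overline{E}(x,\hat x)(\hat x-x)}{(\hat x-x)^\top\overline{E}(x,\hat x)(\hat x-x)}\,(\hat x-x), & \text{if } \hat x\neq x,\\[2mm] z(x), & \text{otherwise}.\end{cases}$$ Then $(\overline{E},\overline{z})$ is a discrete gradient pair for $(\mathcal{H},E,z)$.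
   Context: Let $\mathcal{H}\in C^1(\mathbb{R}^n,\mathbb{R})$, $E\in C(\mathbb{R}^n,\mathbb{R}^{n,n})$ and $z\in C(\mathbb{R}^n,\mathbb{R}^n)$ satisfy $\nabla\mathcal{H}(x)=E(x)^\top z(x)$ for all $x\in\mathbb{R}^n$. A pair $(\overline{E},\overline{z})\in C(\mathbb{R}^n\times\mathbb{R}^n,\mathbb{R}^{n,n})\times C(\mathbb{R}^n\times\mathbb{R}^n,\mathbb{R}^n)$ (i.e. both maps continuous) is called a discrete gradient pair for $(\mathcal{H},E,z)$ if (i) $\overline{E}(x,x)=E(x)$ for all $x\in\mathbb{R}^n$; (ii) $\overline{z}(x,x)=z(x)$ for all $x\in\mathbb{R}^n$; (iii) $\overline{z}(x,\hat x)^\top\overline{E}(x,\hat x)(\hat x-x)=\mathcal{H}(\hat x)-\mathcal{H}(x)$ for all $(x,\hat x)\in\mathbb{R}^n\times\mathbb{R}^n$. *)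

From HB Require Import structures.
From mathcomp Require Import all_boot all_order all_algebra.
From mathcomp Require Import all_classical all_reals all_analysis.
Set Implicit Arguments. Unset Strict Implicit. Unset Printing Implicit Defensive.
Import Order.TTheory GRing.Theory Num.Theory.
Import numFieldNormedType.Exports.
Local Open Scope ring_scope.

Definition grad (R : realType) (n : nat) (H : 'cV[R]_n -> R) (x : 'cV[R]_n)
  : 'cV[R]_n := \col_i ('d H x (delta_mx i 0)).

Definition C1 (R : realType) (n : nat) (H : 'cV[R]_n -> R) : Prop :=
  (forall x, differentiable H x) /\ continuous (grad H).

Definition bil (R : realType) (n : nat) (u : 'cV[R]_n) (A : 'M[R]_n) (v : 'cV[R]_n) : R :=
  (u^T *m A *m v) 0 0.

Definition sym_posdef (R : realType) (n : nat) (A : 'M[R]_n) : Prop :=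
  A^T = A /\ (forall v : 'cV[R]_n, v != 0 -> 0 < bil v A v).

Definition discrete_gradient_pair (R : realType) (n : nat)
  (H : 'cV[R]_n -> R) (E : 'cV[R]_n -> 'M[R]_n) (z : 'cV[R]_n -> 'cV[R]_n)
  (Eb : 'cV[R]_n -> 'cV[R]_n -> 'M[R]_n) (zb : 'cV[R]_n -> 'cV[R]_n -> 'cV[R]_n) : Prop :=
  continuous (fun p : 'cV[R]_n * 'cV[R]_n => Eb p.1 p.2) /\
  continuous (fun p : 'cV[R]_n * 'cV[R]_n => zb p.1 p.2) /\
  (forall x, Eb x x = E x) /\
  (forall x, zb x x = z x) /\
  (forall x xh, bil (zb x xh) (Eb x xh) (xh - x) = H xh - H x).

Definition midpoint (R : realType) (n : nat) (x xh : 'cV[R]_n) : 'cV[R]_n :=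
  (2%:R^-1 : R) *: (xh + x).

Definition Ebar (R : realType) (n : nat) (E : 'cV[R]_n -> 'M[R]_n)
  (x xh : 'cV[R]_n) : 'M[R]_n := E (midpoint x xh).

Definition zbar (R : realType) (n : nat) (H : 'cV[R]_n -> R)
  (E : 'cV[R]_n -> 'M[R]_n) (z : 'cV[R]_n -> 'cV[R]_n)
  (x xh : 'cV[R]_n) : 'cV[R]_n :=
  if xh != x then
    z (midpoint x xh) +
    ((H xh - H x - bil (z (midpoint x xh)) (Ebar E x xh) (xh - x))
       / bil (xh - x) (Ebar E x xh) (xh - x)) *: (xh - x)
  else z x.

From HB Require Import structures.
From mathcomp Require Import all_boot all_order all_algebra.
From mathcomp Require Import all_classical all_reals all_analysis.
From mathcomp Require Import ring lra.
Import Order.TTheory GRing.Theory Num.Theory.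
Import numFieldNormedType.Exports.
Local Open Scope ring_scope.
Local Open Scope classical_set_scope.
Set Implicit Arguments. Unset Strict Implicit. Unset Printing Implicit Defensive.

(* Only the continuity of [zbar] on the diagonal needs an argument. Write
   [zbar x xh = z m + zbar_corr x xh] with [m] the midpoint and [d = xh - x].
   By the mean value theorem [H xh - H x = grad H y . d] for some [y] on the
   segment, and [grad H m = E(m)^T z(m)], so the numerator of the correction is
   [(grad H y - grad H m) . d = O(|grad H y - grad H m| |d|)]. Positive
   definiteness, made uniform near a point by compactness of the unit sphere
   and continuity of [E], bounds the denominator below by [c |d|^2]. So the
   correction is [O(|grad H y - grad H m|)], which tends to 0 by continuity of
   [grad H]. *)

Section MatrixNorm.
Variable R : realType.

Lemma mx_entry_le_norm m n (M : 'M[R]_(m, n)) i j : `|M i j| <= `|M|.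
Proof. by rewrite [leRHS]/Num.norm /= mx_normrE; apply/bigmax_geP; right; exists (i, j). Qed.

Lemma mx_norm_le m n (M : 'M[R]_(m, n)) c :
  0 <= c -> (forall i j, `|M i j| <= c) -> `|M| <= c.
Proof. by move=> c0 Mc; rewrite [leLHS]/Num.norm /= mx_normrE; apply: bigmax_le => // -[i j] _. Qed.

Lemma mx_norm_trmx m n (M : 'M[R]_(m, n)) : `|M^T| = `|M|.
Proof.
apply/eqP; rewrite eq_le !mx_norm_le // => i j; last by rewrite mxE mx_entry_le_norm.
by have := mx_entry_le_norm M^T j i; rewrite mxE.
Qed.

Lemma mx_norm1_le1 n : `|(1%:M : 'M[R]_n)| <= 1.
Proof. by apply: mx_norm_le => // i j; rewrite !mxE; case: (i == j); rewrite ?normr1 ?normr0. Qed.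

Lemma continuous_trmx m n : continuous (fun M : 'M[R]_(m, n) => M^T).
Proof.
move=> M; apply/(@cvgrPdist_lt _ _ _ (nbhs M) (nbhs_filter M)) => e e0; near=> N.
by rewrite -linearB /= mx_norm_trmx; near: N; exact: cvgr_dist_lt.
Unshelve. all: by end_near. Qed.

End MatrixNorm.

Section Bilinear.
Variables (R : realType) (n : nat).
Implicit Types (u v w : 'cV[R]_n) (A B : 'M[R]_n).

Lemma bilE u A v : bil u A v = \sum_j \sum_i u i 0 * A i j * v j 0.
Proof.
rewrite /bil !mxE; apply: eq_bigr => j _; rewrite mxE big_distrl.
by apply: eq_bigr => i _; rewrite !mxE.
Qed.

Lemma bilDl u w A v : bil (u + w) A v = bil u A v + bil w A v.
Proof. by rewrite /bil linearD !mulmxDl mxE. Qed.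

Lemma bilZl k u A v : bil (k *: u) A v = k * bil u A v.
Proof. by rewrite /bil linearZ /= -!scalemxAl mxE. Qed.

Lemma bilBl u w A v : bil (u - w) A v = bil u A v - bil w A v.
Proof. by rewrite bilDl -scaleN1r bilZl mulN1r. Qed.

Lemma bilZr k u A v : bil u A (k *: v) = k * bil u A v.
Proof. by rewrite /bil -scalemxAr mxE. Qed.

Lemma bilDm u A B v : bil u (A + B) v = bil u A v + bil u B v.
Proof. by rewrite /bil mulmxDr mulmxDl mxE. Qed.

Lemma bil0r u A : bil u A 0 = 0.
Proof. by rewrite /bil mulmx0 mxE. Qed.

Lemma bil_trmx_mul A u g v : A^T *m u = g -> bil u A v = bil g 1%:M v.
Proof. by move<-; rewrite /bil mulmx1 trmx_mul trmxK. Qed.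

Lemma diff_bil_grad (H : 'cV[R]_n -> R) x d : 'd H x d = bil (grad H x) 1%:M d.
Proof.
rewrite /bil mulmx1 mxE {1}(matrix_sum_delta d) linear_sum /=.
apply: eq_bigr => j _; rewrite big_ord1 linearZ /= !mxE mulrC.
by congr (_ * _); rewrite (ord1 ord0).
Qed.

Lemma norm_bil_le u A v : `|bil u A v| <= (n * n)%:R * (`|u| * `|A| * `|v|).
Proof.
rewrite bilE; apply: le_trans (ler_norm_sum _ _ _) _.
apply: (@le_trans _ _ (\sum_(j < n) \sum_(i < n) (`|u| * `|A| * `|v|))).
  apply: ler_sum => j _; apply: le_trans (ler_norm_sum _ _ _) _.
  by apply: ler_sum => i _; rewrite !normrM !ler_pM ?mx_entry_le_norm ?mulr_ge0.
by rewrite !sumr_const !card_ord -mulrnA mulr_natl.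
Qed.

Lemma continuous_bil (T : topologicalType) (f : T -> 'cV[R]_n) (M : T -> 'M[R]_n)
    (g : T -> 'cV[R]_n) t :
  {for t, continuous f} -> {for t, continuous M} -> {for t, continuous g} ->
  {for t, continuous (fun s => bil (f s) (M s) (g s))}.
Proof.
move=> cf cM cg; rewrite (_ : (fun s => _) = fun s => \sum_j \sum_i f s i 0 * M s i j * g s j 0).
  apply: cvg_big => // [|j _]; first exact: add_continuous.
  apply: cvg_big => // [|i _]; first exact: add_continuous.
  apply: cvgM; first apply: cvgM.
  - exact: (continuous_comp cf (@coord_continuous _ _ _ _ _ _)).
  - exact: (continuous_comp cM (@coord_continuous _ _ _ _ _ _)).
  - exact: (continuous_comp cg (@coord_continuous _ _ _ _ _ _)).
by apply/funext => s; rewrite bilE.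
Qed.

End Bilinear.

Section Coercivity.
Variables (R : realType) (n : nat).

Lemma posdef_coercive (A : 'M[R]_n) : (forall v, v != 0 -> 0 < bil v A v) ->
  exists2 c, 0 < c & forall d, c * `|d| ^+ 2 <= bil d A d.
Proof.
(* The sphere is taken in ['rV_n] because [bounded_closed_compact] is stated
   for row vectors; it is empty only when [n = 0]. *)
move=> Apos; pose S := [set r : 'rV[R]_n | `|r| = 1]; pose q r := bil r^T A r^T.
have normalize d : d != 0 -> S (`|d|^-1 *: d)^T /\ q (`|d|^-1 *: d)^T = `|d| ^- 2 * bil d A d.
  move=> d0; have nd : `|d| != 0 by rewrite normr_eq0.
  split; first by rewrite /S /= mx_norm_trmx normrZ normfV normr_id mulVf.
  by rewrite /q trmxK bilZl bilZr mulrA -invfM -expr2.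
have [S0|S0] := pselect (S !=set0); last first.
  exists 1 => // d; have [->|d0] := eqVneq d 0; first by rewrite normr0 expr0n mul1r bil0r.
  by exfalso; apply: S0; exists (`|d|^-1 *: d)^T; case: (normalize d d0).
have Scompact : compact S.
  apply: bounded_closed_compact.
    by exists 1; split; [rewrite num_real | move=> M M1 x /= ->; exact: ltW].
  apply: (@closed_comp _ _ _ [set 1 : R]); first by move=> x _; exact: norm_continuous.
  exact: closed_eq.
have qcont : {within S, continuous q}.
  apply: continuous_subspaceT => r.
  by apply: continuous_bil;
    [exact: continuous_trmx | exact: cst_continuous | exact: continuous_trmx].
have [r /set_mem Sr rmin] := compact_EVT_min S0 Scompact qcont.
have qr_gt0 : 0 < q r.
  apply: Apos; apply/eqP => /(congr1 trmx); rewrite trmxK linear0 => r0.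
  by move: Sr; rewrite /S /= r0 normr0 => /esym/eqP; rewrite oner_eq0.
exists (q r) => // d; have [->|d0] := eqVneq d 0; first by rewrite normr0 expr0n mulr0 bil0r.
have [Sd qd] := normalize d d0; have nd : 0 < `|d| ^+ 2 by rewrite exprn_gt0 ?normr_gt0.
by have := rmin _ (mem_set Sd); rewrite qd mulrC ler_pdivlMr.
Qed.

Lemma posdef_coercive_near (T : topologicalType) (E : T -> 'M[R]_n) x0 :
  {for x0, continuous E} -> (forall v, v != 0 -> 0 < bil v (E x0) v) ->
  exists2 c, 0 < c & \forall x \near x0, forall d, c * `|d| ^+ 2 <= bil d (E x) d.
Proof.
move=> cE Epos; have [c c0 Ec] := posdef_coercive Epos.
pose K : R := (n * n)%:R.
exists (c / 2); first by rewrite divr_gt0.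
have eta0 : 0 < c / (2 * (K + 1)) by rewrite divr_gt0 // mulr_gt0 // ltr_wpDl.
have := cvgr_dist_lt _ _ cE _ eta0; move=> /(_ (nbhs_filter x0)).
apply: filterS => x Ex d.
have -> : E x = E x0 + (E x - E x0) by rewrite addrC subrK.
move: (norm_bil_le d (E x - E x0) d) => /ler_normlP[perturb _].
have perturb_small : K * (`|d| * `|E x - E x0| * `|d|) <= c / 2 * `|d| ^+ 2.
  rewrite (_ : _ * _ = K * `|E x - E x0| * `|d| ^+ 2); last by rewrite expr2; ring.
  rewrite ler_wpM2r ?exprn_ge0 //.
  apply: (@le_trans _ _ (K * (c / (2 * (K + 1))))); first by rewrite ler_wpM2l // distrC ltW.
  have K1 : 0 < K + 1 by rewrite ltr_wpDl.
  have -> : K * (c / (2 * (K + 1))) = c / 2 - c / (2 * (K + 1)) by field; rewrite gt_eqF.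
  by rewrite lerBlDr lerDl ltW.
have := Ec d; rewrite bilDm; lra.
Qed.

End Coercivity.

Section NormedModule.
Variables (R : realType) (V : normedModType R).

Lemma differentiable_MVT (f : V -> R) x d : (forall y, differentiable f y) ->
  exists2 t : R, t \in `[0, 1]%R & f (x + d) - f x = 'd f (x + t *: d) d.
Proof.
move=> df; pose g t := f (x + t *: d).
have g_derive t : derivable g t 1 /\ 'D_1 g t = 'd f (x + t *: d) d.
  have quotient_eq : (fun h : R => h^-1 *: ((g \o shift t) (h *: 1) - g t)) =
            (fun h : R => h^-1 *: ((f \o shift (x + t *: d)) (h *: d) - f (x + t *: d))).
    apply/funext => h; rewrite /g /= /shift /=.
    by congr (_ *: (f _ - _)); rewrite -[h%:A]/(h * 1) mulr1 scalerDl addrCA.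
  split; first by rewrite /derivable quotient_eq; exact: diff_derivable.
  by rewrite /derive quotient_eq -/(derive f _ d) deriveE.
have [t t01 mvt] := @MVT_segment R g (fun t => 'd f (x + t *: d) d) 0 1 ler01
  (fun t _ => let: conj g1 g2 := g_derive t in DeriveDef g1 g2)
  (derivable_within_continuous (fun t _ => (g_derive t).1)).
by move: mvt; rewrite /g scale1r scale0r addr0 subr0 mulr1 => mvt; exists t.
Qed.

Lemma ball_convex (x0 a b : V) (r t : R) : 0 <= t <= 1 ->
  `|x0 - a| < r -> `|x0 - b| < r -> `|x0 - (a + t *: (b - a))| < r.
Proof.
move=> /andP[t0 t1] ar br; set M := Num.max `|x0 - a| `|x0 - b|.
have -> : x0 - (a + t *: (b - a)) = (1 - t) *: (x0 - a) + t *: (x0 - b).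
  rewrite scalerBl scale1r -addrA -scalerN -scalerDr opprB [a - x0 + _]addrA subrK.
  by rewrite opprD addrA -scalerN opprB.
apply: le_lt_trans (ler_normD _ _) _; rewrite !normrZ !ger0_norm ?subr_ge0 //.
apply: le_lt_trans (_ : _ <= (1 - t) * M + t * M) _.
  by rewrite lerD // ler_wpM2l ?subr_ge0 // le_max lexx ?orbT.
by rewrite -mulrDl subrK mul1r gt_max ar br.
Qed.

Lemma dist_le_via_center (c x y : V) (e : R) :
  `|c - x| < e -> `|c - y| < e -> `|x - y| <= 2 * e.
Proof.
move=> cx cy; apply: le_trans (ler_distD c x y) _.
by rewrite distrC mulr_natl mulr2n lerD // ltW.
Qed.

End NormedModule.

Section Midpoint.
Variables (R : realType) (n : nat).
Implicit Types x a b : 'cV[R]_n.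

Lemma midpointxx x : midpoint x x = x.
Proof. by apply/matrixP => i j; rewrite !mxE; field. Qed.

Lemma midpointE a b : midpoint a b = a + 2^-1 *: (b - a).
Proof. by apply/matrixP => i j; rewrite !mxE; field. Qed.

Lemma continuous_midpoint : continuous (fun p : 'cV[R]_n * 'cV[R]_n => midpoint p.1 p.2).
Proof.
move=> p; have p2 : {for p, continuous snd} by exact: cvg_snd.
have p1 : {for p, continuous fst} by exact: cvg_fst.
exact: (continuousZl_tmp (k := 2^-1 : R) (continuousD p2 p1)).
Qed.

Lemma continuous_Ebar (E : 'cV[R]_n -> 'M[R]_n) :
  continuous E -> continuous (fun p : 'cV[R]_n * 'cV[R]_n => Ebar E p.1 p.2).
Proof. by move=> cE p; exact: (continuous_comp (@continuous_midpoint p) (@cE _)). Qed.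

End Midpoint.

Section Correction.
Variables (R : realType) (n : nat) (H : 'cV[R]_n -> R)
  (E : 'cV[R]_n -> 'M[R]_n) (z : 'cV[R]_n -> 'cV[R]_n).

Definition zbar_corr (x xh : 'cV[R]_n) : 'cV[R]_n :=
  ((H xh - H x - bil (z (midpoint x xh)) (Ebar E x xh) (xh - x))
     / bil (xh - x) (Ebar E x xh) (xh - x)) *: (xh - x).

Lemma zbarE x xh : zbar H E z x xh = z (midpoint x xh) + zbar_corr x xh.
Proof.
rewrite /zbar /zbar_corr; case: eqP => [->|_] //=.
by rewrite !subrr scaler0 addr0 midpointxx.
Qed.

Hypothesis E_posdef : forall x v, v != 0 -> 0 < bil v (E x) v.

Lemma zbar_discrete_gradient x xh :
  bil (zbar H E z x xh) (Ebar E x xh) (xh - x) = H xh - H x.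
Proof.
rewrite zbarE /zbar_corr bilDl bilZl.
have [->|xh_neq_x] := eqVneq xh x; first by rewrite !subrr !bil0r mulr0 addr0.
have den_neq0 : bil (xh - x) (Ebar E x xh) (xh - x) != 0.
  by rewrite gt_eqF // E_posdef // subr_eq0.
by rewrite divfK // addrC subrK.
Qed.

Hypothesis H_diff : forall x, differentiable H x.
Hypothesis Ez_grad : forall x, (E x)^T *m z x = grad H x.

Lemma norm_zbar_corr_le a b c : 0 < c ->
  c * `|b - a| ^+ 2 <= bil (b - a) (E (midpoint a b)) (b - a) ->
  exists2 t : R, 0 <= t <= 1 &
    `|zbar_corr a b| <= (n * n)%:R / c * `|grad H (a + t *: (b - a)) - grad H (midpoint a b)|.
Proof.
move=> c0 Ec; set d := b - a; set m := midpoint a b.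
have [t /[!in_itv]/= t01 H_mvt] := differentiable_MVT a d H_diff.
exists t => //; set K : R := (n * n)%:R; set dg := grad H _ - grad H m.
have [d0|d_neq0] := eqVneq d 0.
  by rewrite /zbar_corr -/d -/m d0 scaler0 normr0 mulr_ge0 ?divr_ge0 // ltW.
have dpos : 0 < `|d| ^+ 2 by rewrite exprn_gt0 // normr_gt0.
have Dpos : 0 < bil d (E m) d by apply: lt_le_trans Ec; rewrite mulr_gt0.
have num_eq : H b - H a - bil (z m) (E m) d = bil dg 1%:M d.
  have <- : a + d = b by rewrite addrC subrK.
  by rewrite H_mvt diff_bil_grad (bil_trmx_mul _ (Ez_grad m)) bilBl.
have num_le : `|bil dg 1%:M d| <= K * `|dg| * `|d|.
  apply: le_trans (norm_bil_le _ _ _) _; rewrite -/K -!mulrA !ler_wpM2l //.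
  by rewrite -[leRHS]mul1r ler_wpM2r ?mx_norm1_le1.
rewrite /zbar_corr /Ebar -/d -/m num_eq normrZ normrM normfV (gtr0_norm Dpos) mulrAC.
rewrite ler_pdivrMr //; apply: le_trans (_ : _ <= K * `|dg| * `|d| ^+ 2) _.
  by rewrite expr2 mulrA ler_wpM2r.
have -> : K * `|dg| * `|d| ^+ 2 = K / c * `|dg| * (c * `|d| ^+ 2).
  by field; rewrite gt_eqF.
by apply: ler_wpM2l => //; rewrite mulr_ge0 // divr_ge0 // ltW.
Qed.

Hypothesis grad_cont : continuous (grad H).
Hypothesis E_cont : continuous E.

Lemma continuous_zbar_corr_diag x0 :
  {for (x0, x0), continuous (fun p : 'cV[R]_n * 'cV[R]_n => zbar_corr p.1 p.2)}.
Proof.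
apply/(@cvgrPdist_le _ _ _ (nbhs (x0, x0)) (nbhs_filter _)) => e e0.
have -> : zbar_corr x0 x0 = 0 by rewrite /zbar_corr !subrr scaler0.
set K : R := (n * n)%:R.
have [c c0 Ec] := posdef_coercive_near (@E_cont x0) (E_posdef x0).
have K1 : 0 < K + 1 by rewrite ltr_wpDl.
pose eta := e * c / (2 * (K + 1)).
have eta0 : 0 < eta by rewrite divr_gt0 ?mulr_gt0.
have := cvgr_dist_lt _ _ (@grad_cont x0) _ eta0; move=> /(_ (nbhs_filter x0)) grad_near.
have [r r0 near_x0] := iffLR (nbhs_ballP _ _) (filterI grad_near Ec).
apply/nbhs_ballP; exists r => // -[a b] [/= ar br]; rewrite -ball_normE /= in ar br.
have segment_near t : 0 <= t <= 1 -> `|grad H x0 - grad H (a + t *: (b - a))| < eta /\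
    forall d, c * `|d| ^+ 2 <= bil d (E (a + t *: (b - a))) d.
  by move=> t01; apply: near_x0; rewrite -ball_normE /=; exact: ball_convex.
have half01 : 0 <= (2^-1 : R) <= 1 by apply/andP; split; lra.
have [gm Em] := segment_near _ half01; rewrite -midpointE in gm Em.
have [t t01 corr_le] := norm_zbar_corr_le c0 (Em _).
have [gy _] := segment_near _ t01.
rewrite sub0r normrN; apply: le_trans corr_le _.
apply: le_trans (_ : _ <= K / c * (2 * eta)) _.
  rewrite -/K; apply: ler_wpM2l; first by rewrite divr_ge0 // ltW.
  exact: dist_le_via_center gy gm.
have -> : K / c * (2 * eta) = e - e / (K + 1).
  by rewrite /eta; field; rewrite -natrM -/K !gt_eqF.
by rewrite lerBlDr lerDl divr_ge0 ?ltW.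
Qed.

Hypothesis z_cont : continuous z.

Lemma continuous_zbar_corr_offdiag (p : 'cV[R]_n * 'cV[R]_n) : p.1 != p.2 ->
  {for p, continuous (fun q : 'cV[R]_n * 'cV[R]_n => zbar_corr q.1 q.2)}.
Proof.
move=> p12; have c1 : {for p, continuous fst} by exact: cvg_fst.
have c2 : {for p, continuous snd} by exact: cvg_snd.
have cH : continuous H by move=> x; exact: differentiable_continuous.
have cd : {for p, continuous (fun q : 'cV[R]_n * 'cV[R]_n => q.2 - q.1)}.
  exact: continuousB c2 c1.
have cE : {for p, continuous (fun q : 'cV[R]_n * 'cV[R]_n => Ebar E q.1 q.2)}.
  exact: continuous_Ebar.
have cz : {for p, continuous (fun q : 'cV[R]_n * 'cV[R]_n => z (midpoint q.1 q.2))}.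
  exact: continuous_comp (@continuous_midpoint _ _ p) (@z_cont _).
have cden := continuous_bil cd cE cd.
have cnum := continuousB
  (continuousB (continuous_comp c2 (@cH _)) (continuous_comp c1 (@cH _)))
  (continuous_bil cz cE cd).
have den_neq0 : bil (p.2 - p.1) (Ebar E p.1 p.2) (p.2 - p.1) != 0.
  by rewrite gt_eqF // E_posdef // subr_eq0 eq_sym.
pose den q := bil (q.2 - q.1) (Ebar E q.1 q.2) (q.2 - q.1).
have corr_cont := continuousZ (continuousM cnum (continuousV (s := den) den_neq0 cden)) cd.
exact: corr_cont.
Qed.

Lemma continuous_zbar : continuous (fun p : 'cV[R]_n * 'cV[R]_n => zbar H E z p.1 p.2).
Proof.
move=> [x xh].
have corr_cont :
    {for (x, xh), continuous (fun p : 'cV[R]_n * 'cV[R]_n => zbar_corr p.1 p.2)}.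
  have [<-|x_neq_xh] := eqVneq x xh; first exact: continuous_zbar_corr_diag.
  exact: continuous_zbar_corr_offdiag.
have zmid_cont :
    {for (x, xh), continuous (fun p : 'cV[R]_n * 'cV[R]_n => z (midpoint p.1 p.2))}.
  exact: (continuous_comp (@continuous_midpoint _ _ _) (@z_cont _)).
have zbar_cont := continuousD zmid_cont corr_cont.
suff -> : (fun p : 'cV[R]_n * 'cV[R]_n => zbar H E z p.1 p.2) =
    (fun p => z (midpoint p.1 p.2) + zbar_corr p.1 p.2) by [].
by apply/funext => p; rewrite zbarE.
Qed.

End Correction.

Theorem theorem1 (R : realType) (n : nat) (H : 'cV[R]_n -> R)
  (E : 'cV[R]_n -> 'M[R]_n) (z : 'cV[R]_n -> 'cV[R]_n) :
  C1 H -> continuous E -> continuous z ->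
  (forall x, (E x)^T *m z x = grad H x) ->
  (forall x, sym_posdef (E x)) ->
  discrete_gradient_pair H E z (Ebar E) (zbar H E z).
Proof.
move=> [H_diff grad_cont] E_cont z_cont Ez_grad E_sym_posdef.
have E_posdef x v : v != 0 -> 0 < bil v (E x) v by exact: (E_sym_posdef x).2.
split; first exact: continuous_Ebar.
split; first exact: continuous_zbar.
split; first by move=> x; rewrite /Ebar midpointxx.
split; first by move=> x; rewrite /zbar eqxx.
exact: zbar_discrete_gradient.
Qed.
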